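(* Let $\mathbb{T}=\mathbb{R}/\mathbb{Z}$ with Haar probability measure $\mu$, outer measure $\mu^*$ and inner measure $\mu_*$. There exist subsets $A,B\subset\mathbb{T}$ and a real number $\alpha>0$ such that $A+B$ is Haar measurable and satisfies $0<\mu(A+B)\leq\alpha\,\mu^*(A)$, and yet for all positive integers $m,n$ the set $mB-nB$ is Haar measurable and satisfies $\mu(mB-nB)>\alpha^{m+n}\mu_*(A)$.
   Context: $\mu^*(S)=\inf\{\mu(U):U\supset S\text{ measurable}\}$, $\mu_*(S)=\sup\{\mu(K):K\subset S,\ K\text{ compact}\}$. $mB-nB=\{b_1+\dots+b_m-b_1'-\dots-b_n':b_i,b_j'\in B\}$. *)

From HB Require Import structures.
From mathcomp Require Import all_boot all_order all_algebra.
From mathcomp Require Import all_classical all_reals all_analysis.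
Set Implicit Arguments. Unset Strict Implicit. Unset Printing Implicit Defensive.
Import Order.TTheory GRing.Theory Num.Theory.
Local Open Scope classical_set_scope.
Local Open Scope ring_scope.

(* The circle T = R/Z is modelled by 1-periodic subsets of R:
   a subset S of T corresponds to its preimage under R -> R/Z. *)
Section Torus.
Variable R : realType.

Definition tper (S : set R) : Prop := forall x : R, S (x + 1) <-> S x.

Definition Lmeas (S : set R) : Prop :=
  ((@wlength R idfun)^*)%mu.-cara.-measurable S.

Definition fund : set R := `[0%R, 1%R[%classic.

Definition haar_measurable (S : set R) : Prop := Lmeas (S `&` fund).
Definition haar (S : set R) : \bar R :=
  completed_lebesgue_measure (S `&` fund).

Definition haar_outer (S : set R) : \bar R :=
  ereal_inf [set haar U | U in [set U | tper U /\ haar_measurable U /\ S `<=` U]].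

(* inner measure: sup of mu(K) over compact K contained in S; compact
   subsets of T are exactly the images of closed 1-periodic subsets of R *)
Definition haar_inner (S : set R) : \bar R :=
  ereal_sup [set haar K | K in [set K | tper K /\ closed (K : set R^o) /\ K `<=` S]].

Definition sumset (A B : set R) : set R := [set a + b | a in A & b in B].
Definition negset (A : set R) : set R := [set - a | a in A].
Fixpoint msum (B : set R) (k : nat) : set R :=
  match k with
  | 0 => [set 0]
  | k'.+1 => sumset (msum B k') B
  end.
Definition diffset (B : set R) (m n : nat) : set R :=
  sumset (msum B m) (negset (msum B n)).

End Torus.

From Pilot Require Import Defs.
From HB Require Import structures.
From mathcomp Require Import all_boot all_order all_algebra.
From mathcomp Require Import all_classical all_reals all_analysis.
From mathcomp Require Import measurable_realfun lra.
Set Implicit Arguments. Unset Strict Implicit. Unset Printing Implicit Defensive.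
Import Order.TTheory GRing.Theory Num.Theory.
Local Open Scope classical_set_scope.
Local Open Scope ring_scope.

(* Take for A the preimage of a Vitali set of T (one point in each coset of
   Q/Z) and B = T, so that A + B = mB - nB = T has measure 1.  Countably many
   rational translates of A cover T, hence mu^*(A) > 0 and alpha = 1/mu^*(A)
   works.  On the other hand, for a compact K included in A, the translates
   of K by the rationals 1/(k+1) are pairwise disjoint and, restricted to
   [0,1), lie in an interval of length 2; hence mu(K) = 0 and mu_*(A) = 0. *)

Lemma natmul_le_bound_le0 (R : archiRealFieldType) (x c : R) :
  (forall n, x *+ n <= c) -> x <= 0.
Proof.
move=> xc; rewrite leNgt; apply/negP => x_gt0.
have c_ge0 : 0 <= c / x.
  by rewrite divr_ge0 ?(ltW x_gt0)//; have := xc 0%N; rewrite mulr0n.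
have := xc (Num.Def.archi_bound (c / x)); apply/negP; rewrite -ltNge.
by rewrite -mulr_natl -ltr_pdivrMr// archi_boundP.
Qed.

Lemma intr_gtN1_lt1_eq0 (R : numDomainType) (z : int) :
  -1 < z%:~R :> R -> z%:~R < 1 :> R -> z = 0.
Proof.
rewrite -(mulrN1z 1) (_ : (1 : R) = 1%:~R) // !ltr_int.
by case: z => [[|n]|n].
Qed.

Section Translation.
Variable R : realType.
Local Notation mu_star := ((@wlength R idfun)^*)%mu.

Definition translate (c : R) (S : set R) : set R := [set x | S (x - c)].

Lemma translate_itv_oc (c a b : R) :
  translate c `]a, b]%classic = `]a + c, b + c]%classic.
Proof.
by apply/seteqP; split => x; rewrite /translate /= !in_itv /= ltrBrDr lerBlDr.
Qed.

Lemma translateK c : cancel (translate c) (translate (- c)).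
Proof. by move=> S; apply/seteqP; split => x; rewrite /translate /= opprK addrK. Qed.

Lemma translateNK c : cancel (translate (- c)) (translate c).
Proof. by move=> S; apply/seteqP; split => x; rewrite /translate /= opprK subrK. Qed.

Lemma mu_star_translate_le c S : (mu_star (translate c S) <= mu_star S)%E.
Proof.
apply: le_ereal_inf_tmp => _ [F [mF SF] <-]; apply: ereal_inf_lbound.
exists (fun k => translate c (F k)); last first.
  apply: eq_eseriesr => k _ /=; have [[a b] _ <-] := mF k.
  rewrite translate_itv_oc !wlength_itv /= !lte_fin ltrD2r.
  by case: ifP => // _; rewrite -!EFinB opprD addrACA subrr addr0.
split=> [k|x Sx]; last by have [k _ Fkx] := SF _ Sx; exists k.
by have [[a b] _ <-] := mF k; exists (a + c, b + c); rewrite ?translate_itv_oc.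
Qed.

Lemma mu_star_translate c S : mu_star (translate c S) = mu_star S.
Proof.
apply/le_anti; rewrite mu_star_translate_le /=.
by rewrite -{1}(translateK c S) mu_star_translate_le.
Qed.

Lemma translateI c A B : translate c (A `&` B) = translate c A `&` translate c B.
Proof. by []. Qed.

Lemma translateC c A : translate c (~` A) = ~` translate c A.
Proof. by []. Qed.

Lemma Lmeas_translate c S : Lmeas S -> Lmeas (translate c S).
Proof.
change (mu_star.-caratheodory S -> mu_star.-caratheodory (translate c S)).
move=> mS X; have := mS (translate (- c) X).
rewrite mu_star_translate -(mu_star_translate c (_ `&` S)).
by rewrite -(mu_star_translate c (_ `&` ~` S)) !translateI translateC translateNK.
Qed.

End Translation.

Section Circle.
Variable R : realType.
Local Notation mu_star := ((@wlength R idfun)^*)%mu.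

Lemma haarE S : haar S = mu_star (S `&` @fund R).
Proof. by []. Qed.

Lemma Lmeas_measurable (S : set R) : measurable S -> Lmeas S.
Proof. exact: sub_caratheodory. Qed.

Lemma mu_star_fund : mu_star (@fund R) = 1%E.
Proof.
have := lebesgue_measure_itv (`[0, 1[ : interval R).
by rewrite /= lte_fin ltr01 sube0.
Qed.

Lemma haar_measurableT : haar_measurable (@setT R).
Proof.
by rewrite /haar_measurable setTI; apply: Lmeas_measurable; exact: measurable_itv.
Qed.

Lemma haar_setT : haar (@setT R) = 1%E.
Proof. by rewrite haarE setTI mu_star_fund. Qed.

Lemma haar_outer_le1 (S : set R) : (haar_outer S <= 1)%E.
Proof.
rewrite -haar_setT; apply: ereal_inf_lbound; exists setT => //.
by split=> //; split=> //; exact: haar_measurableT.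
Qed.

Lemma mu_star_le_haar_outer (S : set R) : (mu_star (S `&` @fund R) <= haar_outer S)%E.
Proof.
apply: le_ereal_inf_tmp => _ [U [_ [_ SU]] <-].
by rewrite haarE; apply: le_outer_measure; exact: setSI.
Qed.

Lemma haar_inner_eq0 (S : set R) :
  (forall K, closed (K : set R^o) -> K `<=` S -> mu_star (K `&` @fund R) = 0%E) ->
  haar_inner S = 0%E.
Proof.
move=> K_null; apply/le_anti/andP; split.
  by apply: ge_ereal_sup => _ [K [_ [cK KS]] <-]; rewrite haarE K_null.
apply: ereal_sup_ubound; exists set0; last by rewrite haarE set0I outer_measure0.
by split=> //; split; [exact: closed0 | exact: sub0set].
Qed.

Lemma tper_intD (S : set R) : tper S -> forall (z : int) x, S (x + z%:~R) <-> S x.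
Proof.
move=> perS; have natD n x : S (x + n%:R) <-> S x.
  by elim: n x => [|n IHn] x; rewrite ?addr0 // -natr1 addrA perS IHn.
case=> n x; first exact: natD.
by rewrite NegzE mulrNz -(natD n.+1) subrK.
Qed.

End Circle.

Section Vitali.
Variable R : realType.
Local Notation mu_star := ((@wlength R idfun)^*)%mu.

Definition rationals : set R := range ratr.

Lemma rationalsD x y : rationals x -> rationals y -> rationals (x + y).
Proof. by move=> [p _ <-] [q _ <-]; exists (p + q); rewrite ?rmorphD. Qed.

Lemma rationalsN x : rationals x -> rationals (- x).
Proof. by move=> [p _ <-]; exists (- p); rewrite ?rmorphN. Qed.

Lemma rationals0 : rationals 0.
Proof. by exists 0; rewrite ?rmorph0. Qed.

Definition rep (x : R) : R := xget 0 [set y | rationals (y - x)].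

Lemma rep_rational x : rationals (rep x - x).
Proof.
apply: (@xgetPex _ 0 [set y | rationals (y - x)]).
by exists x; rewrite /= subrr; exact: rationals0.
Qed.

Lemma rep_eq x y : rationals (x - y) -> rep x = rep y.
Proof.
move=> Qxy; rewrite /rep; congr xget; apply/seteqP; split => z /= Qz.
  by rewrite -(subrK x z) -addrA; exact: rationalsD.
rewrite -(subrK y z) -addrA; apply: rationalsD => //.
by rewrite -opprB; exact: rationalsN.
Qed.

(* [vitali] is the preimage in R of a Vitali set of T = R/Z: modulo 1, it
   contains exactly one point of each coset of Q. *)
Definition vitali : set R := [set x | exists z : int, x - rep x = z%:~R].

Lemma vitali_tper : tper vitali.
Proof.
move=> x; rewrite /vitali /= (@rep_eq (x + 1) x); last first.
  by rewrite addrAC subrr add0r; exists 1; rewrite ?rmorph1.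
split=> -[z xz]; first by exists (z - 1); rewrite rmorphB /= -xz addrAC addrK.
by exists (z + 1); rewrite rmorphD /= -xz addrAC.
Qed.

Lemma vitali_rep x : vitali (rep x).
Proof. by exists 0; rewrite (rep_eq (rep_rational x)) subrr. Qed.

Lemma vitali_rational_diff x y : vitali x -> vitali y -> rationals (x - y) ->
  exists z : int, x - y = z%:~R.
Proof.
move=> [a xa] [b yb] /rep_eq xy; exists (a - b).
by rewrite rmorphB /= -xa -yb xy opprB addrA subrK.
Qed.

Definition qenum (n : nat) : R := ratr (odflt 0 (unpickle n)).

Lemma vitali_translates_cover :
  [set: R] `<=` \bigcup_n translate (qenum n) (vitali `&` @fund R).
Proof.
move=> x _; have [q _ qx] := rep_rational x; pose z := Num.floor (rep x).
exists (pickle (z%:~R - q)) => //; rewrite /translate /qenum pickleK /=.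
have -> : x - ratr (z%:~R - q) = rep x + (- z)%:~R.
  by rewrite rmorphB rmorph_int rmorphN /=; lra.
split; first by apply/(tper_intD vitali_tper); exact: vitali_rep.
rewrite /fund /= in_itv /= rmorphN /=; apply/andP; split.
  by rewrite subr_ge0 floor_le.
by have := floorD1_gt (rep x); rewrite -/z intrD; lra.
Qed.

Lemma mu_star_vitali_gt0 : (0 < mu_star (vitali `&` @fund R))%E.
Proof.
rewrite lt_neqAle outer_measure_ge0 andbT; apply/negP => /eqP V0.
have : (mu_star (@fund R) <=
        \sum_(0 <= n <oo) mu_star (translate (qenum n) (vitali `&` @fund R)))%E.
  apply: le_trans (outer_measure_sigma_subadditive mu_star _).
  by apply: le_outer_measure => x _; exact: vitali_translates_cover.
under eq_eseriesr do rewrite mu_star_translate -V0.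
by rewrite eseries0 // mu_star_fund lee_fin ler10.
Qed.

Lemma haar_outer_vitali_gt0 : (0 < haar_outer vitali)%E.
Proof. exact: lt_le_trans mu_star_vitali_gt0 (mu_star_le_haar_outer _). Qed.

Lemma trivIset_translate_vitali (S : set R) (c : nat -> R) :
  S `<=` vitali `&` @fund R -> injective c -> (forall k, 0 < c k <= 1) ->
  (forall k, rationals (c k)) -> trivIset setT (fun k => translate (c k) S).
Proof.
move=> SV c_inj c01 cQ i j _ _ [x [/SV[Vi fi] /SV[Vj fj]]]; apply: c_inj.
move: fi fj (c01 i) (c01 j); rewrite /fund /= !in_itv /=.
move=> /andP[i0 i1] /andP[j0 j1] /andP[ci0 ci1] /andP[cj0 cj1].
have [|z ij] := vitali_rational_diff Vi Vj.
  rewrite opprB [_ + (_ - x)]addrC addrA subrK.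
  by apply: rationalsD => //; exact: rationalsN.
have z0 : z = 0 by apply: (@intr_gtN1_lt1_eq0 R); rewrite -ij; lra.
by move: ij; rewrite z0 /=; lra.
Qed.

Lemma mu_star_closed_vitali (K : set R) : closed (K : set R^o) -> K `<=` vitali ->
  mu_star (K `&` @fund R) = 0%E.
Proof.
move=> cK KV; set K0 := K `&` @fund R.
have mK0 : Lmeas K0.
  apply: Lmeas_measurable; apply: measurableI; last exact: measurable_itv.
  exact: closed_measurable.
pose c (k : nat) : R := k.+1%:R^-1.
have c01 k : 0 < c k <= 1 by rewrite invr_gt0 ltr0n invf_le1 ?ler1n ?ltr0n.
have c_inj : injective c by move=> i j /invr_inj /eqP; rewrite eqr_nat => /eqP[].
have cQ k : rationals (c k) by exists (k.+1%:R^-1); rewrite ?fmorphV ?rmorph_nat.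
pose F k := translate (c k) K0.
have F_sub k : F k `<=` `[0, 2[%classic.
  move=> x; rewrite /F /translate /K0 /fund /= !in_itv /= => -[_ /andP[x0 x1]].
  by have /andP[? ?] := c01 k; apply/andP; split; lra.
have le2 n : (mu_star K0 *+ n <= 2%:E)%E.
  have <- : (\sum_(i < n) mu_star K0 = mu_star K0 *+ n)%E.
    by rewrite sumr_const card_ord.
  under eq_bigr => i _ do rewrite -(mu_star_translate (c i) K0).
  have := measure_bigsetU (@completed_lebesgue_measure R)
    (fun k => Lmeas_translate (c k) mK0)
    (trivIset_translate_vitali (@setSI _ (@fund R) _ _ KV) c_inj c01 cQ) n.
  move=> <-; have := lebesgue_measure_itv (`[0, 2[ : interval R).
  rewrite /= lte_fin ltr0n /= sube0 => <-; apply: le_outer_measure.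
  apply: subset_trans (@bigsetU_bigcup _ F n) _.
  by apply: bigcup_sub => k _; exact: F_sub.
have K0_fin : mu_star K0 \is a fin_num.
  by rewrite ge0_fin_numE ?outer_measure_ge0 // (le_lt_trans (le2 1%N)) ?ltry.
rewrite -(fineK K0_fin); congr EFin; apply/le_anti.
rewrite fine_ge0 ?outer_measure_ge0 // andbT.
apply: (@natmul_le_bound_le0 _ _ 2) => n.
by rewrite -lee_fin EFin_natmul fineK.
Qed.

Lemma haar_inner_vitali : haar_inner vitali = 0%E.
Proof. exact/haar_inner_eq0/mu_star_closed_vitali. Qed.

End Vitali.

Section Sumsets.
Variable R : realType.

Lemma sumsetTr (X : set R) x0 : X x0 -> sumset X setT = setT.
Proof.
move=> Xx0; apply/seteqP; split => // y _.
by exists x0 => //; exists (y - x0) => //; rewrite addrC subrK.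
Qed.

Lemma msum_mem0 (B : set R) k : B 0 -> Defs.msum B k 0.
Proof.
by move=> B0; elim: k => [|k IHk] //=; exists 0 => //; exists 0; rewrite ?addr0.
Qed.

Lemma msum_setT n : Defs.msum (@setT R) n.+1 = setT.
Proof. exact: sumsetTr (msum_mem0 n _). Qed.

Lemma diffset_setT m n : (0 < n)%N -> diffset (@setT R) m n = setT.
Proof.
case: n => // n _; rewrite /diffset msum_setT.
have -> : negset (@setT R) = setT.
  by apply/seteqP; split => // y _; exists (- y) => //; rewrite opprK.
exact: sumsetTr (msum_mem0 m _).
Qed.

End Sumsets.

Theorem proposition5p5 (R : realType) :
  exists (A B : set R) (alpha : R),
    [/\ tper A /\ tper B, 0 < alpha,
     haar_measurable (sumset A B),
     (0 < haar (sumset A B) <= alpha%:E * haar_outer A)%E &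
     forall m n : nat, (0 < m)%N -> (0 < n)%N ->
       haar_measurable (diffset B m n) /\
       ((alpha ^+ (m + n))%:E * haar_inner A < haar (diffset B m n))%E].
Proof.
have outer_fin : haar_outer (@vitali R) \is a fin_num.
  rewrite ge0_fin_numE; last exact: ltW (haar_outer_vitali_gt0 _).
  exact: le_lt_trans (haar_outer_le1 _) (ltry 1).
set r := fine (haar_outer (@vitali R)).
have outerE : haar_outer (@vitali R) = r%:E by rewrite fineK.
have r_gt0 : 0 < r by rewrite -lte_fin -outerE haar_outer_vitali_gt0.
have AT : sumset (@vitali R) setT = setT := sumsetTr (vitali_rep 0).
exists (@vitali R), setT, r^-1; split.
- by split; [exact: vitali_tper | move=> x].
- by rewrite invr_gt0.
- by rewrite AT; exact: haar_measurableT.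
- by rewrite AT haar_setT outerE -EFinM mulVf ?gt_eqF // lte01 lexx.
move=> m n _ n_gt0; rewrite diffset_setT //; split; first exact: haar_measurableT.
by rewrite haar_setT haar_inner_vitali mule0 lte01.
Qed.
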